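(* Let $(M,J,g)$ be a quasi-K\''ahler manifold with Norden metric and let $\nabla'$ be the connection with totally skew-symmetric torsion $\nabla'_xy=\nabla_xy+Q(x,y)$, where $Q(x,y)=\frac14\{(\nabla_xJ)Jy-(\nabla_{Jx}J)y-2(\nabla_yJ)Jx\}$. Suppose the torsion of $\nabla'$ is parallel with respect to $\nabla'$ and the curvature tensor of $\nabla'$ is a K\''ahler tensor. Then the curvature tensor $R$ of the Levi-Civita connection satisfies $$R(x,y,Jz,Jw)+R(x,y,z,w)=g\bigl(Q(x,y),(\nabla_{Jz}J)w+(\nabla_wJ)Jz\bigr)$$ for all vector fields $x,y,z,w$.
   Context: An almost complex manifold with Norden metric $(M,J,g)$ has $J^2=-\mathrm{Id}$, $g(Jx,Jy)=-g(x,y)$; $\nabla$ is the Levi-Civita connection of $g$, $F(x,y,z)=g((\nabla_xJ)y,z)$, and the manifold is quasi-K\''ahler if $F(x,y,z)+F(y,z,x)+F(z,x,y)=0$. The torsion of $\nabla'$ is $T(x,y)=\nabla'_xy-\nabla'_yx-[x,y]$. For a connection $D$, $R^D(x,y)z=D_xD_yz-D_yD_xz-D_{[x,y]}z$ and $R^D(x,y,z,w)=g(R^D(x,y)z,w)$; $R$ is the curvature of $\nabla$. A $(0,4)$-tensor $L$ is a K\''ahler tensor if $L(x,y,z,w)=-L(y,x,z,w)=-L(x,y,w,z)$, $L(x,y,z,w)+L(y,z,x,w)+L(z,x,y,w)=0$, and $L(x,y,Jz,Jw)=-L(x,y,z,w)$. *)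

(* Algebraic (Lie–Rinehart style) model of the calculus of
   vector fields on a manifold: F = ring of smooth functions, X = F-module of
   smooth vector fields, der x f = x(f), br = Lie bracket. *)
From HB Require Import structures.
From mathcomp Require Import all_boot all_order all_algebra.
Set Implicit Arguments. Unset Strict Implicit. Unset Printing Implicit Defensive.
Import Order.TTheory GRing.Theory Num.Theory.
Local Open Scope ring_scope.

Section VF.
Variables (F : comUnitRingType) (X : lmodType F).
Variables (der : X -> F -> F) (br : X -> X -> X) (g : X -> X -> F).

Definition is_derivation_action : Prop :=
  [/\ forall x f h, der x (f + h) = der x f + der x h,
      forall x f h, der x (f * h) = der x f * h + f * der x h,
      forall x y f, der (x + y) f = der x f + der y f &
      forall (a : F) x f, der (a *: x) f = a * der x f].

Definition is_lie_bracket : Prop :=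
  [/\ forall x y, br x y = - br y x,
      forall x y z, br x (y + z) = br x y + br x z,
      forall x y (a : F), br x (a *: y) = a *: br x y + der x a *: y,
      forall x y z, br x (br y z) + br y (br z x) + br z (br x y) = 0 &
      forall x y f, der (br x y) f = der x (der y f) - der y (der x f)].

Definition is_metric : Prop :=
  [/\ forall x y, g x y = g y x,
      forall x y z, g (x + y) z = g x z + g y z,
      forall (a : F) x y, g (a *: x) y = a * g x y &
      forall y, (forall x, g x y = 0) -> y = 0].

Definition is_connection (D : X -> X -> X) : Prop :=
  [/\ forall x y z, D (x + y) z = D x z + D y z,
      forall (a : F) x y, D (a *: x) y = a *: D x y,
      forall x y z, D x (y + z) = D x y + D x z &
      forall x (a : F) y, D x (a *: y) = der x a *: y + a *: D x y].

Definition is_levi_civita (D : X -> X -> X) : Prop :=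
  [/\ is_connection D,
      forall x y, D x y - D y x = br x y &
      forall x y z, der x (g y z) = g (D x y) z + g y (D x z)].

Definition is_norden (J : X -> X) : Prop :=
  [/\ forall x y, J (x + y) = J x + J y,
      forall (a : F) x, J (a *: x) = a *: J x,
      forall x, J (J x) = - x &
      forall x y, g (J x) (J y) = - g x y].

Definition covJ (D : X -> X -> X) (J : X -> X) (x y : X) : X :=
  D x (J y) - J (D x y).

Definition Ften (D : X -> X -> X) (J : X -> X) (x y z : X) : F :=
  g (covJ D J x y) z.

Definition is_quasi_kahler (D : X -> X -> X) (J : X -> X) : Prop :=
  forall x y z, Ften D J x y z + Ften D J y z x + Ften D J z x y = 0.

Definition Qten (D : X -> X -> X) (J : X -> X) (x y : X) : X :=
  (4%:R)^-1 *: (covJ D J x (J y) - covJ D J (J x) y - 2%:R *: covJ D J y (J x)).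

Definition nablaP (D : X -> X -> X) (J : X -> X) (x y : X) : X :=
  D x y + Qten D J x y.

Definition torsion (D : X -> X -> X) (x y : X) : X := D x y - D y x - br x y.

Definition torsion_parallel (D : X -> X -> X) : Prop :=
  forall x y z,
    D x (torsion D y z) - torsion D (D x y) z - torsion D y (D x z) = 0.

Definition curv (D : X -> X -> X) (x y z : X) : X :=
  D x (D y z) - D y (D x z) - D (br x y) z.

Definition curv4 (D : X -> X -> X) (x y z w : X) : F := g (curv D x y z) w.

Definition is_kahler_tensor (J : X -> X) (L : X -> X -> X -> X -> F) : Prop :=
  [/\ forall x y z w, L x y z w = - L y x z w,
      forall x y z w, L x y z w = - L x y w z,
      forall x y z w, L x y z w + L y z x w + L z x y w = 0 &
      forall x y z w, L x y (J z) (J w) = - L x y z w].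

End VF.

(* The tensor Q is skew-symmetric and g(Q(x,y),z) is totally skew-symmetric
   (this is where the quasi-Kähler condition enters), so the torsion of
   nabla' = nabla + Q is 2Q.  When it is parallel, the derivative terms in the
   comparison of the two curvature tensors cancel, and R' = R plus a quadratic
   expression in Q; the first Bianchi identity, which holds for R and by
   assumption for R', reduces that expression to g(Q(x,y),Q(z,w)).  Applying
   R'(x,y,Jz,Jw) = -R'(x,y,z,w) together with Q(x,Jy) = JQ(x,y) - (nabla_x J)y
   gives the formula. *)
From HB Require Import structures.
From mathcomp Require Import all_boot all_order all_algebra ring.
Import GRing.Theory.
Local Open Scope ring_scope.

Lemma additive_oppr (U V : zmodType) (f : U -> V) :
  (forall x y, f (x + y) = f x + f y) -> forall x, f (- x) = - f x.
Proof.
move=> fD x; have f0 : f 0 = 0 by apply: (addrI (f 0)); rewrite -fD !addr0.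
by apply/eqP; rewrite -addr_eq0 addrC -fD addrN f0.
Qed.

(* [ring] does not use hypotheses; with these it checks instead that the goal
   is a stated linear combination of them. *)
Section LinearCombinations.
Context {R : pzRingType}.

Lemma lincomb1_eq0 {l r : R} : l = r -> forall k b : R, b = k * (l - r) -> b = 0.
Proof. by move=> -> k b ->; rewrite subrr mulr0. Qed.

Lemma lincomb2_eq0 {l1 r1 l2 r2 : R} : l1 = r1 -> l2 = r2 ->
  forall k1 k2 b : R, b = k1 * (l1 - r1) + k2 * (l2 - r2) -> b = 0.
Proof. by move=> -> -> k1 k2 b ->; rewrite !subrr !mulr0 addr0. Qed.

Lemma lincomb3_eq0 {l1 r1 l2 r2 l3 r3 : R} : l1 = r1 -> l2 = r2 -> l3 = r3 ->
  forall k1 k2 k3 b : R,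
  b = k1 * (l1 - r1) + k2 * (l2 - r2) + k3 * (l3 - r3) -> b = 0.
Proof. by move=> -> -> -> k1 k2 k3 b ->; rewrite !subrr !mulr0 !addr0. Qed.

End LinearCombinations.

Section Norden.
Context {F : comUnitRingType} {X : lmodType F}
  {der : X -> F -> F} {br : X -> X -> X} {g : X -> X -> F}
  {nabla : X -> X -> X} {J : X -> X}.
Hypotheses (hder : is_derivation_action der) (hbr : is_lie_bracket der br)
  (hg : is_metric g) (hlc : is_levi_civita der br g nabla) (hJ : is_norden g J).

Local Notation P := (covJ nabla J).

Lemma derN x f : der x (- f) = - der x f.
Proof. by apply: additive_oppr => a b; case: hder. Qed.

Lemma metricC x y : g x y = g y x. Proof. by case: hg. Qed.
Lemma metricDl x y z : g (x + y) z = g x z + g y z. Proof. by case: hg. Qed.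
Lemma metricZl (a : F) x y : g (a *: x) y = a * g x y. Proof. by case: hg. Qed.
Lemma metricNl x y : g (- x) y = - g x y.
Proof. by move: x; apply: additive_oppr => a b; apply: metricDl. Qed.
Lemma metricNr x y : g x (- y) = - g x y.
Proof. by rewrite metricC metricNl metricC. Qed.
Lemma metricDr x y z : g x (y + z) = g x y + g x z.
Proof. by rewrite metricC metricDl !(metricC x). Qed.
Lemma metric0l y : g 0 y = 0.
Proof. by rewrite -(subrr (0 : X)) metricDl metricNl subrr. Qed.

Lemma metric_inj u v : (forall w, g u w = g v w) -> u = v.
Proof.
move=> eq_uv; apply: subr0_eq; case: hg => _ _ _; apply=> w.
by rewrite metricC metricDl metricNl eq_uv subrr.
Qed.

Lemma nablaDl x y z : nabla (x + y) z = nabla x z + nabla y z.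
Proof. by case: hlc => -[]. Qed.
Lemma nablaDr x y z : nabla x (y + z) = nabla x y + nabla x z.
Proof. by case: hlc => -[]. Qed.
Lemma nablaNr x y : nabla x (- y) = - nabla x y.
Proof. by apply: additive_oppr => a b; apply: nablaDr. Qed.
Lemma nabla_swap x y : nabla y x = nabla x y - br x y.
Proof. by case: hlc => _ tf _; rewrite -tf opprB addrC subrK. Qed.
Lemma der_metric x y z : der x (g y z) = g (nabla x y) z + g y (nabla x z).
Proof. by case: hlc. Qed.

Lemma JD x y : J (x + y) = J x + J y. Proof. by case: hJ. Qed.
Lemma JJ x : J (J x) = - x. Proof. by case: hJ. Qed.
Lemma JN x : J (- x) = - J x.
Proof. by apply: additive_oppr; apply: JD. Qed.
Lemma metricJJ x y : g (J x) (J y) = - g x y. Proof. by case: hJ. Qed.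
Lemma metricJ x y : g (J x) y = g x (J y).
Proof. by rewrite -[RHS]opprK -metricJJ JJ metricNr opprK. Qed.

Lemma curv4_bianchi a b c d :
  curv4 br g nabla a b c d + curv4 br g nabla b c a d
    + curv4 br g nabla c a b d = 0.
Proof.
have jacobi : br a (br b c) + br b (br c a) + br c (br a b) = 0 by case: hbr.
have := congr1 (g ^~ d) jacobi; rewrite metric0l /= !metricDl => g_jacobi.
rewrite /curv4 /curv (nabla_swap b c) (nabla_swap c a) (nabla_swap a b).
rewrite (nabla_swap a (br b c)) (nabla_swap b (br c a)) (nabla_swap c (br a b)).
rewrite !(nablaDr, nablaNr) !(metricDl, metricNl).
by apply: (lincomb1_eq0 g_jacobi 1); ring.
Qed.

Lemma covJDl a b c : P (a + b) c = P a c + P b c.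
Proof.
by apply: metric_inj => w; rewrite /covJ !nablaDl JD !(metricDl, metricNl); ring.
Qed.
Lemma covJDr a b c : P a (b + c) = P a b + P a c.
Proof.
by apply: metric_inj => w; rewrite /covJ JD !nablaDr JD !(metricDl, metricNl); ring.
Qed.
Lemma covJNr a b : P a (- b) = - P a b.
Proof. by apply: additive_oppr => u v; apply: covJDr. Qed.
Lemma covJ_Jr a b : P a (J b) = - J (P a b).
Proof.
apply: metric_inj => w.
by rewrite /covJ !(JJ, nablaNr, JD, JN) !(metricDl, metricNl); ring.
Qed.

(* Differentiating g(Jb,Jc) = -g(b,c) along a. *)
Lemma metric_covJ_J a b c : g (P a b) (J c) + g (P a c) (J b) = 0.
Proof.
have dJJ := der_metric a (J b) (J c); have d := der_metric a b c.
rewrite metricJJ derN (metricC (J b)) in dJJ; rewrite (metricC b (nabla a c)) in d.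
rewrite /covJ !(metricDl, metricNl) !metricJJ.
by apply: (lincomb2_eq0 dJJ d (-1) (-1)); ring.
Qed.

Lemma metric_covJC a b c : g (P a b) c = g (P a c) b.
Proof.
have := metric_covJ_J a b (J c).
rewrite JJ metricNr covJ_Jr metricNl metricJJ => h.
by apply: subr0_eq; apply: (lincomb1_eq0 h (-1)); ring.
Qed.

Lemma metric_covJ_Jr a b c : g (P a b) (J c) = - g (P a (J b)) c.
Proof. by rewrite -metricJ covJ_Jr metricNl opprK. Qed.

Section QuasiKahler.
Hypotheses (unit2 : (2%:R : F) \is a GRing.unit) (hqk : is_quasi_kahler g nabla J).

Local Notation Q := (Qten nabla J).

Lemma unit4 : (4%:R : F) \is a GRing.unit.
Proof. by rewrite (natrM F 2 2) unitrM unit2. Qed.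

Lemma quasi_kahler_cycle a b c : g (P a b) c + g (P b c) a + g (P c a) b = 0.
Proof. exact: hqk. Qed.

Lemma metric_Qten a b c : g (Q a b) c = (4%:R)^-1 *
  (g (P a (J b)) c - g (P (J a) b) c - 2%:R * g (P b (J a)) c).
Proof. by rewrite /Qten metricZl !(metricDl, metricNl, metricZl); ring. Qed.

Lemma QtenDl a b c : Q (a + b) c = Q a c + Q b c.
Proof.
apply: metric_inj => w.
by rewrite metricDl !metric_Qten JD !(covJDl, covJDr) !metricDl; ring.
Qed.
Lemma QtenDr a b c : Q a (b + c) = Q a b + Q a c.
Proof.
apply: metric_inj => w.
by rewrite metricDl !metric_Qten JD !(covJDl, covJDr) !metricDl; ring.
Qed.
Lemma QtenNl a b : Q (- a) b = - Q a b.
Proof. by move: a; apply: additive_oppr => u v; apply: QtenDl. Qed.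

Lemma Qten_skew a b : Q b a = - Q a b.
Proof.
apply: metric_inj => w; rewrite metricNl; apply: subr0_eq; rewrite opprK.
have h1 := quasi_kahler_cycle a (J b) w.
rewrite (metric_covJC (J b) w a) (metric_covJ_Jr w a b) in h1.
have h2 := quasi_kahler_cycle (J a) b w; rewrite (metric_covJC b w (J a)) in h2.
rewrite !metric_Qten.
by apply: (lincomb2_eq0 h1 h2 (- (4%:R)^-1) (- (4%:R)^-1)); ring.
Qed.

Lemma metric_Qten_skew23 a b c : g (Q a b) c = - g (Q a c) b.
Proof.
apply: subr0_eq; rewrite opprK !metric_Qten.
rewrite (metric_covJC a (J c) b) metric_covJ_Jr (metric_covJC (J a) c b).
have h := quasi_kahler_cycle (J a) b c; rewrite (metric_covJC b c (J a)) in h.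
by apply: (lincomb1_eq0 h (- 2%:R * (4%:R)^-1)); ring.
Qed.

Lemma metric_Qten_cycle a b c : g (Q a b) c = g (Q b c) a.
Proof. by rewrite (metric_Qten_skew23 b c a) (Qten_skew a b) metricNl opprK. Qed.

Lemma Qten_Jr a b : Q a (J b) = J (Q a b) - P a b.
Proof.
apply: metric_inj => w.
rewrite metricDl metricNl metricJ !metric_Qten !metric_covJ_Jr !JJ !covJNr !metricNl.
have h1 := quasi_kahler_cycle (J a) (J b) w.
rewrite (metric_covJC (J b) w (J a)) (metric_covJ_Jr w (J a) b) in h1.
rewrite JJ covJNr metricNl opprK in h1.
have h2 := quasi_kahler_cycle a b w; rewrite (metric_covJC b w a) in h2.
have h4 : 4%:R * (4%:R)^-1 = 1 :> F by rewrite mulrV ?unit4.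
apply: subr0_eq.
apply: (lincomb3_eq0 h1 h2 h4 (- 2%:R * (4%:R)^-1) (2%:R * (4%:R)^-1) (- g (P a b) w)).
by ring.
Qed.

Lemma torsion_nablaP a b : torsion br (nablaP nabla J) a b = Q a b + Q a b.
Proof.
apply: metric_inj => w.
by rewrite /torsion /nablaP (nabla_swap a b) (Qten_skew a b) !(metricDl, metricNl); ring.
Qed.

Lemma metric_Qten_JJ x y z w : g (Q x y) (Q (J z) (J w)) + g (Q x y) (Q z w)
  = - g (Q x y) (P (J z) w + P w (J z)).
Proof.
rewrite (Qten_Jr (J z) w) (Qten_skew w (J z)) (Qten_Jr w z) covJ_Jr (Qten_skew z w).
by rewrite !(JD, JN, JJ, opprK) !(metricDr, metricNr); ring.
Qed.

Section ParallelTorsion.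
Hypotheses (hpar : torsion_parallel br (nablaP nabla J))
  (hkt : is_kahler_tensor J (curv4 br g (nablaP nabla J))).

Local Notation N' := (nablaP nabla J).

Lemma metric_nabla_Qten x y z w : g (nabla x (Q y z)) w = - g (Q x (Q y z)) w
  + g (Q (nabla x y) z) w + g (Q (Q x y) z) w + g (Q y (nabla x z)) w
  + g (Q y (Q x z)) w.
Proof.
have := congr1 (g ^~ w) (hpar x y z); rewrite metric0l /= !torsion_nablaP /nablaP.
rewrite !(nablaDr, QtenDr, QtenDl) !(metricDl, metricNl) => h.
apply: subr0_eq; apply: (mulrI unit2); rewrite mulr0.
by apply: (lincomb1_eq0 h 1); ring.
Qed.

Lemma curv4_nablaP a b c d : curv4 br g N' a b c d = curv4 br g nabla a b c d
  + g (Q a d) (Q b c) - g (Q b d) (Q a c) + 2%:R * g (Q a b) (Q c d).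
Proof.
have -> : curv4 br g N' a b c d = curv4 br g nabla a b c d
    + 2%:R * g (Q (Q a b) c) d + g (Q b (Q a c)) d - g (Q a (Q b c)) d.
  rewrite /curv4 /curv /nablaP !(nablaDr, QtenDr) !(metricDl, metricNl).
  rewrite (metric_nabla_Qten a b c d) (metric_nabla_Qten b a c d).
  by rewrite (nabla_swap a b) (Qten_skew a b) !(QtenDl, QtenNl) !(metricDl, metricNl); ring.
rewrite (metric_Qten_cycle (Q a b) c d) (metricC (Q c d)).
by rewrite (metric_Qten_skew23 b (Q a c) d) (metric_Qten_skew23 a (Q b c) d); ring.
Qed.

Lemma Qten_bianchi a b c d :
  g (Q a d) (Q b c) - g (Q b d) (Q a c) + g (Q a b) (Q c d) = 0.
Proof.
have bianchi' : curv4 br g N' a b c d + curv4 br g N' b c a d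
    + curv4 br g N' c a b d = 0 by case: hkt.
rewrite !curv4_nablaP (Qten_skew a c) (Qten_skew a b) (Qten_skew b c)
  !(metricNl, metricNr) (metricC (Q b c) (Q a d)) (metricC (Q c d) (Q a b))
  (metricC (Q a c) (Q b d)) in bianchi'.
apply: (mulrI unit4); rewrite mulr0.
by apply: (lincomb2_eq0 bianchi' (curv4_bianchi a b c d) 1 (-1)); ring.
Qed.

Lemma curv4_nablaP_Qten a b c d :
  curv4 br g N' a b c d = curv4 br g nabla a b c d + g (Q a b) (Q c d).
Proof.
rewrite curv4_nablaP; apply: subr0_eq.
by apply: (lincomb1_eq0 (Qten_bianchi a b c d) 1); ring.
Qed.

Lemma curv4_JJ x y z w :
  curv4 br g nabla x y (J z) (J w) + curv4 br g nabla x y z w =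
  g (Q x y) (P (J z) w + P w (J z)).
Proof.
have kahlerJ : curv4 br g N' x y (J z) (J w) = - curv4 br g N' x y z w by case: hkt.
rewrite !curv4_nablaP_Qten in kahlerJ.
apply: subr0_eq.
by apply: (lincomb2_eq0 kahlerJ (metric_Qten_JJ x y z w) 1 (-1)); ring.
Qed.

End ParallelTorsion.
End QuasiKahler.
End Norden.

Theorem corollary5p3 (F : comUnitRingType) (X : lmodType F)
  (der : X -> F -> F) (br : X -> X -> X) (g : X -> X -> F)
  (nabla : X -> X -> X) (J : X -> X) :
  (2%:R : F) \is a GRing.unit ->
  is_derivation_action der ->
  is_lie_bracket der br ->
  is_metric g ->
  is_levi_civita der br g nabla ->
  is_norden g J ->
  is_quasi_kahler g nabla J ->
  torsion_parallel br (nablaP nabla J) ->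
  is_kahler_tensor J (curv4 br g (nablaP nabla J)) ->
  forall x y z w : X,
    curv4 br g nabla x y (J z) (J w) + curv4 br g nabla x y z w =
    g (Qten nabla J x y) (covJ nabla J (J z) w + covJ nabla J w (J z)).
Proof.
move=> unit2 hder hbr hg hlc hJ hqk hpar hkt.
exact: (curv4_JJ hder hbr hg hlc hJ unit2 hqk hpar hkt).
Qed.
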